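(* Let $n\ge3$. For every $r\in[3,n]$, the ideal $\tilde{\mathfrak b}_r$ is an atom of $\mathrm{Mon}(R)$.
   Context: Let $K$ be a field, $N\ge2$, $R=K[X_1,\dots,X_N]$, $X=X_1$, $Y=X_2$. $\mathrm{Mon}(R)$ is the monoid of nonzero monomial ideals of $R$ under ideal multiplication, with identity $R$ (its only unit); an atom of $\mathrm{Mon}(R)$ is an $I\ne R$ in $\mathrm{Mon}(R)$ not a product of two elements of $\mathrm{Mon}(R)\setminus\{R\}$. $[x,y]=\{z\in\mathbb Z:x\le z\le y\}$. For $i\in\mathbb N^+$, $\mathfrak b_i=\langle X^i,Y^i\rangle$. Fix an integer $n\ge 3$ and positive integers $a_1,\dots,a_{n+1}$ with (C1) $a_{n+1}=a_1+\dots+a_{n-1}+2a_n$ and (C2) $a_{i+1}>2(a_1+\dots+a_i)$ for all $i\in[1,n-1]$. For $I\subseteq[1,n+1]$ put $a_I=\sum_{i\in I}a_i$ ($a_\emptyset=0$). For $r\in[3,n]$, $\tilde{\mathfrak b}_r$ is the ideal generated by $\mathfrak b_{a_1}\mathfrak b_{a_3}\mathfrak b_{a_4}\cdots\mathfrak b_{a_r}$ together with the monomial $X^{a_{[3,r]}-a_2}Y^{a_3-a_2}$. *)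

From HB Require Import structures.
From mathcomp Require Import all_boot all_order all_algebra.
From mathcomp Require Import mpoly.
Set Implicit Arguments. Unset Strict Implicit. Unset Printing Implicit Defensive.
Import GRing.Theory.
Local Open Scope ring_scope.

Section MonIdeals.
Variables (K : fieldType) (N : nat).
Notation R := {mpoly K[N]}.

Definition ideq (I J : R -> Prop) : Prop := forall p, I p <-> J p.

Definition gen_ideal (G : R -> Prop) : R -> Prop :=
  fun p => exists s : seq (R * R),
    (forall i, (i < size s)%N -> G (nth (0, 0) s i).2) /\ p = \sum_(x <- s) x.1 * x.2.

Definition whole : R -> Prop := fun _ => True.

Definition iprod (I J : R -> Prop) : R -> Prop :=
  gen_ideal (fun h => exists a b, I a /\ J b /\ h = a * b).

Definition monomial_ideal (I : R -> Prop) : Prop :=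
  exists S : 'X_{1..N} -> Prop,
    ideq I (gen_ideal (fun p => exists m, S m /\ p = 'X_[m])).

Definition nonzero_ideal (I : R -> Prop) : Prop := exists p, I p /\ p != 0.

Definition in_Mon (I : R -> Prop) : Prop := monomial_ideal I /\ nonzero_ideal I.

(* atoms of Mon(R): non-units (i.e. <> R) that are not products of two
   non-units of Mon(R) *)
Definition Mon_atom (I : R -> Prop) : Prop :=
  in_Mon I /\ ~ ideq I whole /\
  ~ (exists J1 J2, in_Mon J1 /\ ~ ideq J1 whole /\
                   in_Mon J2 /\ ~ ideq J2 whole /\ ideq I (iprod J1 J2)).

(* the variable X_(i+1) (0-indexed here); only used with i < N *)
Definition var (i : nat) : R :=
  match insub i with Some j => 'X_j | None => 0 end.

Definition Xv : R := var 0.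
Definition Yv : R := var 1.

Definition bideal (i : nat) : R -> Prop :=
  gen_ideal (fun p => p = Xv ^+ i \/ p = Yv ^+ i).

Definition iprod_list (l : seq (R -> Prop)) : R -> Prop := foldr iprod whole l.

(* tilde b_r, for a sequence a = (a_1, ..., a_{n+1}) given as a : nat -> nat *)
Definition btilde (a : nat -> nat) (r : nat) : R -> Prop :=
  gen_ideal (fun p =>
    iprod_list (bideal (a 1%N) :: [seq bideal (a i) | i <- iota 3 (r - 2)]) p
    \/ p = Xv ^+ ((\sum_(3 <= i < r.+1) a i) - a 2%N) * Yv ^+ (a 3%N - a 2%N)).

End MonIdeals.

(* Only the exponents of X and Y matter. The monomial X^x Y^y lies in
   b_(c_1) ... b_(c_k) iff y >= s and x >= c_1 + ... + c_k - s for some subset sum s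
   of the c_i, and for L = (a_1, a_3, ..., a_r) condition (C2) makes the subset sums
   of L gapped: two of them differ by at most a_1 or by at least a_3 - a_1. Let
   D = sum L, so every monomial of btilde_r has degree at least D in X and Y.
   If btilde_r = J_1 J_2 with proper monomial ideals J_i, factoring X^D, Y^D and the
   extra generator X^(D - a_1 - a_2) Y^(a_3 - a_2) yields X^p_i, Y^q_i and
   X^x_i Y^y_i in J_i, with p_i > 0 because J_i is proper. The crosswise products
   X^p_1 Y^q_2 and X^p_2 Y^q_1 have degree exactly D, which forces q_1 and q_2 to be
   subset sums; multiplying the factors of the extra generator by X^p_j or Y^q_j then
   violates either the degree bound or the gap. *)

From mathcomp Require Import all_boot all_order all_algebra.
From mathcomp Require Import mpoly.
From mathcomp Require Import zify.
Set Implicit Arguments. Unset Strict Implicit. Unset Printing Implicit Defensive.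
Import GRing.Theory.

Section MonomialIdeals.
Variables (K : fieldType) (N : nat).
Local Notation R := {mpoly K[N]}.
Local Notation M := 'X_{1..N}.
Local Open Scope ring_scope.

Definition supported_in (Q : M -> Prop) (p : R) := forall m, m \in msupp p -> Q m.

Definition upward_closed (Q : M -> Prop) := forall m m', (m <= m')%MM -> Q m -> Q m'.

Definition monomials (S : M -> Prop) : R -> Prop := fun p => exists m, S m /\ p = 'X_[m].

Lemma supported_in0 Q : supported_in Q 0.
Proof. by move=> m; rewrite msupp0. Qed.

Lemma supported_inD Q p q :
  supported_in Q p -> supported_in Q q -> supported_in Q (p + q).
Proof. by move=> hp hq m /msuppD_le; rewrite mem_cat => /orP [] ?; auto. Qed.

Lemma supported_inM Q1 Q2 p q : supported_in Q1 p -> supported_in Q2 q ->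
  supported_in (fun m => exists m1 m2, [/\ Q1 m1, Q2 m2 & m = (m1 + m2)%MM]) (p * q).
Proof.
move=> hp hq m /msuppM_le /allpairsP [[m1 m2] /= [/hp h1 /hq h2 ->]].
by exists m1, m2.
Qed.

Lemma supported_inMl Q p q : upward_closed Q -> supported_in Q q -> supported_in Q (p * q).
Proof.
move=> upQ hq m /(supported_inM (Q1 := fun _ => True) (fun _ _ => I) hq).
by case=> m1 [m2 [_ h2 ->]]; apply: upQ (lem_addl _ _) h2.
Qed.

Lemma supported_inX Q m : supported_in Q 'X_[m] <-> Q m.
Proof.
split; first by apply; rewrite msuppX mem_seq1.
by move=> h m' /mem_msuppXP <-.
Qed.

Lemma sub_supported_in (Q Q' : M -> Prop) p :
  (forall m, Q m -> Q' m) -> supported_in Q p -> supported_in Q' p.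
Proof. by move=> QQ' hp m /hp /QQ'. Qed.

Lemma mem_gen_ideal (G : R -> Prop) g : G g -> gen_ideal G g.
Proof.
by move=> Gg; exists [:: (1, g)]; split=> [[]|]; rewrite ?big_seq1 ?mul1r.
Qed.

Lemma gen_ideal0 (G : R -> Prop) : gen_ideal G 0.
Proof. by exists [::]; rewrite big_nil. Qed.

Lemma gen_idealD (G : R -> Prop) p q :
  gen_ideal G p -> gen_ideal G q -> gen_ideal G (p + q).
Proof.
move=> [s [hs ->]] [t [ht ->]]; exists (s ++ t); split; last by rewrite big_cat.
move=> i; rewrite size_cat nth_cat.
case: (ltnP i (size s)) => [lt_is _|le_si lt_i]; first exact: hs.
by apply: ht; rewrite ltn_subLR.
Qed.

Lemma gen_idealMl (G : R -> Prop) c p : gen_ideal G p -> gen_ideal G (c * p).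
Proof.
move=> [s [hs ->]]; exists [seq (c * x.1, x.2) | x <- s]; split.
  by move=> i; rewrite size_map => lt_i; rewrite (nth_map (0, 0)) //; apply: hs.
by rewrite big_map mulr_sumr; apply: eq_bigr => x _; rewrite mulrA.
Qed.

Lemma gen_ideal_sub (G G' : R -> Prop) p :
  (forall g, G g -> gen_ideal G' g) -> gen_ideal G p -> gen_ideal G' p.
Proof.
move=> GG' [s [hs ->]]; elim: s hs => [|x s IHs] hs.
  by rewrite big_nil; apply: gen_ideal0.
rewrite big_cons; apply: gen_idealD; first by apply/gen_idealMl/GG'/(hs 0%N).
by apply: IHs => i; apply: (hs i.+1).
Qed.

Lemma gen_ideal_lepm (G : R -> Prop) m m' :
  gen_ideal G 'X_[m] -> (m <= m')%MM -> gen_ideal G 'X_[m'].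
Proof. by move=> Gm le_mm'; rewrite -(submK le_mm') mpolyXD; apply: gen_idealMl. Qed.

Lemma supported_in_gen_ideal (G : R -> Prop) Q p : upward_closed Q ->
  (forall g, G g -> supported_in Q g) -> gen_ideal G p -> supported_in Q p.
Proof.
move=> upQ GQ [s [hs ->]]; elim: s hs => [|x s IHs] hs.
  by rewrite big_nil; apply: supported_in0.
rewrite big_cons; apply: supported_inD.
  by apply: (supported_inMl upQ); apply/GQ/(hs 0%N).
by apply: IHs => i; apply: (hs i.+1).
Qed.

Lemma gen_monomials_supported Q p : supported_in Q p -> gen_ideal (monomials Q) p.
Proof.
move=> hp; rewrite (mpolyE p) big_seq; apply: big_ind => [||m /hp Qm].
- exact: gen_ideal0.
- exact: gen_idealD.
by rewrite -mul_mpolyC; apply/gen_idealMl/mem_gen_ideal; exists m.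
Qed.

Lemma monomial_ideal_supported (J : R -> Prop) S p :
  ideq J (gen_ideal (monomials S)) -> J p -> supported_in (fun m => J 'X_[m]) p.
Proof.
move=> defJ /defJ; apply: supported_in_gen_ideal.
  by move=> m m' le_mm' /defJ Jm; apply/defJ; apply: gen_ideal_lepm le_mm'.
by move=> _ [m [Sm ->]]; apply/supported_inX/defJ/mem_gen_ideal; exists m.
Qed.

Lemma ideq_whole_of_one (J G : R -> Prop) :
  ideq J (gen_ideal G) -> J 1 -> ideq J (@whole K N).
Proof.
move=> defJ /defJ J1 p; split=> // _.
by apply/defJ; rewrite -[p]mulr1; apply: gen_idealMl.
Qed.

Lemma iprodX (J1 J2 : R -> Prop) u v : J1 'X_[u] -> J2 'X_[v] -> iprod J1 J2 'X_[u + v].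
Proof. by move=> J1u J2v; apply: mem_gen_ideal; exists 'X_[u], 'X_[v]; rewrite mpolyXD. Qed.

Lemma iprod_supported (J1 J2 : R -> Prop) S1 S2 p :
  ideq J1 (gen_ideal (monomials S1)) -> ideq J2 (gen_ideal (monomials S2)) ->
  iprod J1 J2 p ->
  supported_in (fun m => exists u v, [/\ J1 'X_[u], J2 'X_[v] & (u + v <= m)%MM]) p.
Proof.
move=> defJ1 defJ2; apply: supported_in_gen_ideal.
  move=> m m' le_mm' [u [v [J1u J2v le_uv]]].
  by exists u, v; split=> //; apply: lepm_trans le_mm'.
move=> g [x [y [/(monomial_ideal_supported defJ1) Jx]]].
move=> [/(monomial_ideal_supported defJ2) Jy ->].
apply: sub_supported_in (supported_inM Jx Jy) => _ [u [v [J1u J2v ->]]].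
by exists u, v; split=> //; apply: lepm_refl.
Qed.

End MonomialIdeals.

Fixpoint subset_sums (l : seq nat) : seq nat :=
  if l is c :: l' then subset_sums l' ++ [seq x + c | x <- subset_sums l'] else [:: 0].

Lemma mem_subset_sums_cons c l s :
  s \in subset_sums (c :: l) <->
  s \in subset_sums l \/ exists2 x, x \in subset_sums l & s = x + c.
Proof.
rewrite /= mem_cat; split; first by case/orP=> [|/mapP]; [left | right].
by case=> [-> // | [x lx ->]]; apply/orP; right; apply/mapP; exists x.
Qed.

Lemma subset_sums0 l : 0 \in subset_sums l.
Proof. by elim: l => [|c l IHl] //; apply/mem_subset_sums_cons; left. Qed.

Lemma sumn_subset_sums l : sumn l \in subset_sums l.
Proof.
elim: l => [|c l IHl] //; apply/mem_subset_sums_cons; right; exists (sumn l) => //=.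
by rewrite addnC.
Qed.

Lemma subset_sums_le l s : s \in subset_sums l -> s <= sumn l.
Proof.
elim: l s => [|c l IHl] s; first by rewrite inE => /eqP ->.
by case/mem_subset_sums_cons => [/IHl | [x /IHl le_x ->]] /=; lia.
Qed.

Lemma mem_subset_sums_rcons l c s :
  s \in subset_sums (rcons l c) ->
  s \in subset_sums l \/ exists2 x, x \in subset_sums l & s = x + c.
Proof.
elim: l s => [|d l IHl] s; first by case/mem_subset_sums_cons; rewrite ?inE; [left|right].
case/mem_subset_sums_cons => [/IHl [ls | [x lx ->]] | [y /IHl [ly | [x lx ->]] ->]].
- by left; apply/mem_subset_sums_cons; left.
- by right; exists x => //; apply/mem_subset_sums_cons; left.
- by left; apply/mem_subset_sums_cons; right; exists y.
- right; exists (x + d); last by lia.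
  by apply/mem_subset_sums_cons; right; exists x.
Qed.

Definition bprod_exp (l : seq nat) (x y : nat) : Prop :=
  exists2 s, s \in subset_sums l & s <= y /\ sumn l - s <= x.

Lemma bprod_exp_mono l x y x' y' :
  x <= x' -> y <= y' -> bprod_exp l x y -> bprod_exp l x' y'.
Proof. by move=> le_x le_y [s ls [sy sx]]; exists s => //; lia. Qed.

Lemma bprod_exp_cons c l x y x' y' : c <= x \/ c <= y -> bprod_exp l x' y' ->
  bprod_exp (c :: l) (x + x') (y + y').
Proof.
move=> cxy [s ls [sy sx]]; have := subset_sums_le ls; case: cxy => [cx | cy] le_s.
  by exists s; [apply/mem_subset_sums_cons; left | rewrite /=; lia].
by exists (s + c); [apply/mem_subset_sums_cons; right; exists s | rewrite /=; lia].
Qed.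

Section MonomialsInXY.
Variables (K : fieldType) (N : nat) (hN : 2 <= N).
Local Notation R := {mpoly K[N]}.
Local Notation M := 'X_{1..N}.

Definition ix : 'I_N := Ordinal (ltnW hN).
Definition iy : 'I_N := Ordinal hN.

Lemma var_ord (j : 'I_N) : var K N j = 'X_j.
Proof. by rewrite /var insubT. Qed.

Lemma eq_ix_iy : (ix == iy) = false.
Proof. by []. Qed.

Definition mXY (x y : nat) : M := (U_(ix) *+ x + U_(iy) *+ y)%MM.

Lemma mXYE x y i : mXY x y i = x * (ix == i) + y * (iy == i).
Proof. by rewrite mnmDE !mulmnE !mnm1E !(mulnC (_ == i)). Qed.

Lemma mXY_ix x y : mXY x y ix = x.
Proof. by rewrite mXYE eqxx /=; lia. Qed.

Lemma mXY_iy x y : mXY x y iy = y.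
Proof. by rewrite mXYE eqxx /=; lia. Qed.

Lemma mXY00 : mXY 0 0 = 0%MM.
Proof. by apply/mnmP => i; rewrite mXYE mnm0E. Qed.

Lemma mXYD x y x' y' : mXY (x + x') (y + y') = (mXY x y + mXY x' y')%MM.
Proof. by apply/mnmP => i; rewrite mnmDE !mXYE; lia. Qed.

Lemma XY_mpolyX x y : (Xv K N ^+ x * Yv K N ^+ y = 'X_[mXY x y])%R.
Proof. by rewrite /Xv /Yv (var_ord ix) (var_ord iy) !mpolyXn -mpolyXD. Qed.

Lemma mXY_le x y (m : M) : x <= m ix -> y <= m iy -> (mXY x y <= m)%MM.
Proof.
move=> le_x le_y; apply/mnm_lepP => i; rewrite mXYE.
case: (eqVneq ix i) => [<-|_]; first by rewrite eq_sym eq_ix_iy; lia.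
by case: (eqVneq iy i) => [<-|_]; lia.
Qed.

Lemma le_mXY (u : M) x y : (u <= mXY x y)%MM ->
  [/\ u = mXY (u ix) (u iy), u ix <= x & u iy <= y].
Proof.
move/mnm_lepP => le_u; move: (le_u ix) (le_u iy); rewrite mXY_ix mXY_iy.
split=> //; apply/mnmP => i; move: (le_u i); rewrite !mXYE.
case: (eqVneq ix i) => [<-|_]; first by rewrite eq_sym eq_ix_iy; lia.
by case: (eqVneq iy i) => [<-|_]; lia.
Qed.

Definition on_XY (P : nat -> nat -> Prop) (m : M) : Prop := P (m ix) (m iy).

Lemma upward_closed_on_XY (P : nat -> nat -> Prop) :
  (forall x y x' y', x <= x' -> y <= y' -> P x y -> P x' y') -> upward_closed (on_XY P).
Proof. by move=> monoP m m' /mnm_lepP le_m; apply: monoP. Qed.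

Lemma bideal_supported c (p : R) :
  bideal c p -> supported_in (on_XY (fun x y => c <= x \/ c <= y)) p.
Proof.
apply: supported_in_gen_ideal.
  by apply: upward_closed_on_XY => x y x' y' le_x le_y [cx|cy]; [left|right]; lia.
move=> _ [->|->].
  rewrite -[(_ ^+ c)%R]mulr1 -(expr0 (Yv K N)) XY_mpolyX; apply/supported_inX.
  by rewrite /on_XY mXY_ix; left.
rewrite -[(_ ^+ c)%R]mul1r -(expr0 (Xv K N)) XY_mpolyX; apply/supported_inX.
by rewrite /on_XY mXY_iy; right.
Qed.

Lemma bprod_supported l (p : R) :
  iprod_list (map (@bideal K N) l) p -> supported_in (on_XY (bprod_exp l)) p.
Proof.
elim: l p => [|c l IHl] p /=.
  by move=> _ m _; exists 0; rewrite ?subset_sums0.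
apply: supported_in_gen_ideal.
  by apply: upward_closed_on_XY => x y x' y'; apply: bprod_exp_mono.
move=> _ [q [q' [/bideal_supported bq [/IHl bq' ->]]]].
apply: sub_supported_in (supported_inM bq bq') => _ [m [m' [cm lm' ->]]].
by rewrite /on_XY !mnmDE; apply: bprod_exp_cons.
Qed.

Lemma bprod_mXY l s : s \in subset_sums l ->
  iprod_list (map (@bideal K N) l) 'X_[mXY (sumn l - s) s].
Proof.
elim: l s => [|c l IHl] s //=; case/mem_subset_sums_cons => [ls | [x lx ->]].
  have := subset_sums_le ls => le_s.
  rewrite (_ : c + _ - s = c + (sumn l - s)); last by lia.
  rewrite -[s]add0n mXYD; apply: iprodX; last exact: IHl.
  by rewrite -XY_mpolyX expr0 mulr1; apply: mem_gen_ideal; left.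
have := subset_sums_le lx => le_x.
rewrite (_ : c + _ - (x + c) = 0 + (sumn l - x)); last by lia.
rewrite (addnC x) mXYD; apply: iprodX; last exact: IHl.
by rewrite -XY_mpolyX expr0 mul1r; apply: mem_gen_ideal; right.
Qed.

Lemma iprod_factor_XY (J1 J2 : R -> Prop) x y :
  monomial_ideal J1 -> monomial_ideal J2 -> iprod J1 J2 'X_[mXY x y] ->
  exists x1 y1 x2 y2,
    [/\ J1 'X_[mXY x1 y1], J2 'X_[mXY x2 y2], x1 + x2 <= x & y1 + y2 <= y].
Proof.
move=> [S1 defJ1] [S2 defJ2] /(iprod_supported defJ1 defJ2) /supported_inX.
move=> [u [v [J1u J2v le_uv]]].
have [_ le_x le_y] := le_mXY le_uv; rewrite !mnmDE in le_x le_y.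
have [eu _ _] := le_mXY (lepm_trans (lem_addr u v) le_uv).
have [ev _ _] := le_mXY (lepm_trans (lem_addl u v) le_uv).
rewrite eu in J1u; rewrite ev in J2v.
by exists (u ix), (u iy), (v ix), (v iy).
Qed.

End MonomialsInXY.

Section BtildeExponents.
Variable a : nat -> nat.

Definition blist k := a 1 :: [seq a i | i <- iota 3 (k - 2)].

Lemma blist_rcons k : 2 <= k -> blist k.+1 = rcons (blist k) (a k.+1).
Proof.
move=> le2k; rewrite /blist rcons_cons -map_rcons -cats1.
rewrite (_ : k.+1 - 2 = k - 2 + 1) 1?iotaD; last by lia.
by rewrite (_ : 3 + (k - 2) = k.+1) //; lia.
Qed.

Lemma sumn_blist k : 2 <= k -> sumn (blist k) + a 2 = \sum_(1 <= j < k.+1) a j.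
Proof.
elim: k => [|k IHk] // le2k; have [le_k1|lt1k] := leqP k 1.
  rewrite (_ : k = 1); last by lia.
  by rewrite big_nat_recr //= big_nat1 addn0.
rewrite blist_rcons // -cats1 sumn_cat big_nat_recr // -IHk //.
by move: (sumn (blist k)) => s /=; lia.
Qed.

Lemma a3_le_sumn_blist k : 3 <= k -> a 3 <= sumn (blist k).
Proof. by move=> le3k; rewrite /blist (_ : k - 2 = (k - 3).+1) //=; lia. Qed.

Variable r : nat.
Local Notation D := (sumn (blist r)).
Local Notation T := (\sum_(3 <= i < r.+1) a i).

Lemma sumn_blistE : 3 <= r -> D = a 1 + T.
Proof.
move=> le3r; rewrite /blist /= sumnE big_map /index_iota.
by rewrite (_ : r.+1 - 3 = r - 2) //; lia.
Qed.

Lemma a3_le_T : 3 <= r -> a 3 <= T.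
Proof. by move=> le3r; rewrite big_ltn //; lia. Qed.

Definition btilde_exp (x y : nat) : Prop :=
  bprod_exp (blist r) x y \/ T - a 2 <= x /\ a 3 - a 2 <= y.

Lemma btilde_exp_mono x y x' y' : x <= x' -> y <= y' -> btilde_exp x y -> btilde_exp x' y'.
Proof.
move=> le_x le_y [bxy|[le2 le3]]; last by right; lia.
by left; apply: bprod_exp_mono bxy.
Qed.

Variable n : nat.
Hypothesis hn : 3 <= n.
Hypothesis C2 : forall i, 1 <= i <= n.-1 -> 2 * (\sum_(1 <= j < i.+1) a j) < a i.+1.

Lemma double_a1_lt_a2 : 2 * a 1 < a 2.
Proof. by have := C2 (i := 1); rewrite big_nat1; apply; lia. Qed.

Lemma double_a12_lt_a3 : 2 * (a 1 + a 2) < a 3.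
Proof. by have := C2 (i := 2); rewrite big_nat_recr // big_nat1; apply; lia. Qed.

Lemma subset_sums_gap k s t : 2 <= k -> k <= n ->
  s \in subset_sums (blist k) -> t \in subset_sums (blist k) -> t <= s ->
  s <= t + a 1 \/ a 3 + t <= s + a 1.
Proof.
elim: k s t => [|k IHk] s t // le2k le_kn.
have [le_k1|lt1k] := leqP k 1.
  rewrite (_ : k = 1) /blist //=; last by lia.
  by rewrite !inE => /orP [] /eqP -> /orP [] /eqP ->; lia.
have {}IHk := IHk _ _ lt1k (ltnW le_kn).
have := C2 (i := k); rewrite -sumn_blist // => /(_ (introT andP (conj _ _))) C2k.
have {C2k} big_ak : a 3 + sumn (blist k) <= a k.+1 + a 1 /\ sumn (blist k) < a k.+1.
  have [le_k2|lt2k] := leqP k 2; last by have := a3_le_sumn_blist lt2k; lia.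
  by rewrite (_ : k = 2) /blist /= in C2k *; lia.
rewrite blist_rcons // => /mem_subset_sums_rcons [ls|[s' ls' ->]];
  move=> /mem_subset_sums_rcons [lt|[t' lt' ->]].
- exact: IHk.
- by have := subset_sums_le ls; lia.
- by have := subset_sums_le lt; lia.
- by have := IHk s' t' ls' lt'; lia.
Qed.

Hypotheses (le3r : 3 <= r) (le_rn : r <= n).

Lemma btilde_exp_deg x y : btilde_exp x y -> D <= x + y.
Proof.
have lt3 := double_a12_lt_a3; have DT := sumn_blistE le3r.
by case=> [[s /subset_sums_le le_s [sy sx]] | [x_ge y_ge]]; lia.
Qed.

Lemma btilde_exp_low x y : btilde_exp x y -> y < a 3 - a 2 -> D <= x + a 1.
Proof.
have lt2 := double_a1_lt_a2; have lt3 := double_a12_lt_a3.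
case=> [[s ls [sy sx]] | [x_ge y_ge]] y_low; last by lia.
have := subset_sums_gap (t := 0) _ le_rn ls (subset_sums0 _) (leq0n s).
by have := subset_sums_le ls; lia.
Qed.

Lemma btilde_exp_deg_eq x y : btilde_exp x y -> x + y = D -> y \in subset_sums (blist r).
Proof.
have lt3 := double_a12_lt_a3; have DT := sumn_blistE le3r; have a3T := a3_le_T le3r.
case=> [[s ls [sy sx]] | [x_ge y_ge]] deg; last by lia.
by have := subset_sums_le ls; rewrite (_ : y = s) //; lia.
Qed.

Lemma btilde_exp_gap t x y : t \in subset_sums (blist r) -> 0 < t -> btilde_exp x y ->
  y <= a 3 - a 2 + t -> x + t + a 1 + a 2 <= D -> False.
Proof.
have lt2 := double_a1_lt_a2; have lt3 := double_a12_lt_a3; have DT := sumn_blistE le3r.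
move=> lt t_gt0 [[s ls [sy sx]] | [x_ge y_ge]] y_le x_le; last by lia.
have := subset_sums_gap _ le_rn ls lt.
by have := subset_sums_le ls; lia.
Qed.

Lemma btilde_exp_not_sum (P1 P2 : nat -> nat -> Prop) :
  ~ P1 0 0 -> ~ P2 0 0 ->
  (forall x1 y1 x2 y2, P1 x1 y1 -> P2 x2 y2 -> btilde_exp (x1 + x2) (y1 + y2)) ->
  (forall x y, btilde_exp x y -> exists x1 y1 x2 y2,
     [/\ P1 x1 y1, P2 x2 y2, x1 + x2 <= x & y1 + y2 <= y]) ->
  False.
Proof.
move=> P1_00 P2_00 sumP domP.
have lt2 := double_a1_lt_a2; have lt3 := double_a12_lt_a3.
have DT := sumn_blistE le3r; have a3T := a3_le_T le3r.
have [p1 [y1 [p2 [y2 [P1p P2p le_p]]]]] : exists x1 y1 x2 y2,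
    [/\ P1 x1 y1, P2 x2 y2, x1 + x2 <= D & y1 + y2 <= 0].
  by apply: domP; left; exists 0; rewrite ?subset_sums0 //; lia.
rewrite leqn0 addn_eq0 => /andP [/eqP y1_0 /eqP y2_0]; subst y1 y2.
have [x1 [q1 [x2 [q2 [P1q P2q]]]]] : exists x1 y1 x2 y2,
    [/\ P1 x1 y1, P2 x2 y2, x1 + x2 <= 0 & y1 + y2 <= D].
  by apply: domP; left; exists D; rewrite ?sumn_subset_sums //; lia.
rewrite leqn0 addn_eq0 => /andP [/eqP x1_0 /eqP x2_0] le_q; subst x1 x2.
have [x1 [y1 [x2 [y2 [P1e P2e le_x le_y]]]]] :=
  domP _ _ (or_intror (conj (leqnn _) (leqnn _))).
have p1_gt0 : 0 < p1 by case: (posnP p1) P1p => // ->.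
have p2_gt0 : 0 < p2 by case: (posnP p2) P2p => // ->.
have := btilde_exp_deg (sumP _ _ _ _ P1p P2q).
have := btilde_exp_deg (sumP _ _ _ _ P1q P2p).
rewrite !(add0n, addn0) => deg_qp deg_pq.
have ss_q1 : q1 \in subset_sums (blist r).
  by have := btilde_exp_deg_eq (sumP _ _ _ _ P1q P2p); rewrite add0n addn0; apply; lia.
have ss_q2 : q2 \in subset_sums (blist r).
  by have := btilde_exp_deg_eq (sumP _ _ _ _ P1p P2q); rewrite add0n addn0; apply; lia.
have [y1_low|y1_high] := ltnP y1 (a 3 - a 2); last first.
  apply: (btilde_exp_gap ss_q2 _ (sumP _ _ _ _ P1e P2q));
  by have := btilde_exp_deg (sumP _ _ _ _ P1p P2e); lia.
have [y2_low|y2_high] := ltnP y2 (a 3 - a 2); last first.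
  apply: (btilde_exp_gap ss_q1 _ (sumP _ _ _ _ P1q P2e));
  by have := btilde_exp_deg (sumP _ _ _ _ P1e P2p); lia.
have := btilde_exp_low (sumP _ _ _ _ P1e P2p); rewrite addn0 => /(_ y1_low).
by have := btilde_exp_low (sumP _ _ _ _ P1p P2e); rewrite add0n => /(_ y2_low); lia.
Qed.

End BtildeExponents.

Section BtildeAtom.
Variables (K : fieldType) (N : nat) (hN : 2 <= N) (n : nat) (a : nat -> nat).
Hypothesis hn : 3 <= n.
Hypothesis C2 : forall i, 1 <= i <= n.-1 -> 2 * (\sum_(1 <= j < i.+1) a j) < a i.+1.
Variable r : nat.
Hypotheses (le3r : 3 <= r) (le_rn : r <= n).
Local Notation R := {mpoly K[N]}.
Local Notation ix := (ix hN).
Local Notation iy := (iy hN).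
Local Notation mXY := (mXY hN).
Local Notation btr := (@btilde K N a r).

Lemma map_bideal_blist :
  bideal (a 1) :: [seq bideal (a i) | i <- iota 3 (r - 2)] = map (@bideal K N) (blist a r).
Proof. by rewrite /= -map_comp. Qed.

Lemma btilde_supported (p : R) : btr p -> supported_in (on_XY hN (btilde_exp a r)) p.
Proof.
apply: supported_in_gen_ideal.
  by apply: upward_closed_on_XY => x y x2 y2; apply: btilde_exp_mono.
move=> g [|->].
  rewrite map_bideal_blist => /(bprod_supported hN) bg.
  by apply: sub_supported_in bg => m; left.
by rewrite XY_mpolyX; apply/supported_inX; rewrite /on_XY mXY_ix mXY_iy; right.
Qed.

Lemma btilde_mpolyX m : btr 'X_[m] <-> btilde_exp a r (m ix) (m iy).
Proof.
split; first by move/btilde_supported/supported_inX.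
case=> [[s ls [sy sx]] | [x_ge y_ge]].
  apply: (@gen_ideal_lepm _ _ _ (mXY (sumn (blist a r) - s) s)); last exact: mXY_le.
  by apply: mem_gen_ideal; left; rewrite map_bideal_blist; apply: bprod_mXY.
apply: (@gen_ideal_lepm _ _ _ (mXY (\sum_(3 <= i < r.+1) a i - a 2) (a 3 - a 2))).
  by apply: mem_gen_ideal; right; rewrite XY_mpolyX.
exact: mXY_le.
Qed.

Lemma btilde_monomial : monomial_ideal btr.
Proof.
exists (on_XY hN (btilde_exp a r)) => p; split.
  by move/btilde_supported/gen_monomials_supported.
by apply: gen_ideal_sub => _ [m [bm ->]]; apply/btilde_mpolyX.
Qed.

Lemma btilde_in_Mon : in_Mon btr.
Proof.
split; first exact: btilde_monomial.
exists 'X_[mXY (\sum_(3 <= i < r.+1) a i - a 2) (a 3 - a 2)].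
by rewrite -msupp_eq0 msuppX btilde_mpolyX mXY_ix mXY_iy; split=> //; right.
Qed.

Lemma btilde_proper : ~ ideq btr (@whole K N).
Proof.
move=> /(_ 1%R) [_ /(_ I)]; rewrite -mpolyX0 btilde_mpolyX !mnm0E.
move=> /(btilde_exp_deg hn C2).
have := double_a12_lt_a3 hn C2; have := sumn_blistE a le3r; have := a3_le_T a le3r; lia.
Qed.

Lemma btilde_not_iprod (J1 J2 : R -> Prop) :
  monomial_ideal J1 -> ~ ideq J1 (@whole K N) ->
  monomial_ideal J2 -> ~ ideq J2 (@whole K N) ->
  ~ ideq btr (iprod J1 J2).
Proof.
move=> mJ1 nJ1 mJ2 nJ2 defb.
apply: (@btilde_exp_not_sum a r n hn C2 le3r le_rn
          (fun x y => J1 'X_[mXY x y]) (fun x y => J2 'X_[mXY x y])).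
- case: mJ1 => S defJ1; rewrite /= mXY00 mpolyX0 => J1_1.
  exact/nJ1/(ideq_whole_of_one defJ1 J1_1).
- case: mJ2 => S defJ2; rewrite /= mXY00 mpolyX0 => J2_1.
  exact/nJ2/(ideq_whole_of_one defJ2 J2_1).
- move=> x1 y1 x2 y2 J1m J2m.
  by have := iprodX J1m J2m; rewrite -mXYD => /defb /btilde_mpolyX; rewrite mXY_ix mXY_iy.
move=> x y bxy; apply: iprod_factor_XY mJ1 mJ2 _.
by apply/defb/btilde_mpolyX; rewrite mXY_ix mXY_iy.
Qed.

End BtildeAtom.

Theorem theorem4p7 (K : fieldType) (N : nat) (hN : (2 <= N)%N)
  (n : nat) (hn : (3 <= n)%N) (a : nat -> nat)
  (hpos : forall i, (1 <= i <= n.+1)%N -> (0 < a i)%N)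
  (C1 : a n.+1 = ((\sum_(1 <= i < n) a i) + 2 * a n)%N)
  (C2 : forall i, (1 <= i <= n.-1)%N -> (2 * (\sum_(1 <= j < i.+1) a j) < a i.+1)%N)
  (r : nat) (hr : (3 <= r <= n)%N) :
  @Mon_atom K N (@btilde K N a r).
Proof.
have [le3r le_rn] := andP hr.
split; first exact: btilde_in_Mon.
split; first exact: (btilde_proper (K := K) hN hn C2 le3r le_rn).
move=> [J1 [J2 [[mJ1 _] [nJ1 [[mJ2 _] [nJ2 defb]]]]]].
exact: (btilde_not_iprod hN hn C2 le3r le_rn mJ1 nJ1 mJ2 nJ2 defb).
Qed.
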